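(* If $n\ge3$, then the kernel of $\theta:FVB_n\to{\rm Aut}(F_{2n})$ is nontrivial.
   Context: $FVB_n$ is the flat virtual braid group: generators $\sigma_1,\dots,\sigma_{n-1},\rho_1,\dots,\rho_{n-1}$, relations $\sigma_i\sigma_j=\sigma_j\sigma_i$ and $\rho_i\rho_j=\rho_j\rho_i$ and $\sigma_i\rho_j=\rho_j\sigma_i$ for $|i-j|\ge2$; $\sigma_i\sigma_{i+1}\sigma_i=\sigma_{i+1}\sigma_i\sigma_{i+1}$; $\rho_i\rho_{i+1}\rho_i=\rho_{i+1}\rho_i\rho_{i+1}$; $\rho_i\rho_{i+1}\sigma_i=\sigma_{i+1}\rho_i\rho_{i+1}$; $\rho_i^2=\sigma_i^2=1$. $F_{2n}$ is free on $x_1,\dots,x_n,y_1,\dots,y_n$ and $\theta$ is the homomorphism with $\theta(\sigma_i):x_i\mapsto x_{i+1}y_{i+1},\ x_{i+1}\mapsto x_iy_{i+1}^{-1}$ and $\theta(\rho_i):x_i\leftrightarrow x_{i+1},\ y_i\leftrightarrow y_{i+1}$ (swapping), all other generators fixed; automorphisms compose on the right, $(fg)(x)=g(f(x))$. *)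

From mathcomp Require Import all_boot.
Set Implicit Arguments. Unset Strict Implicit. Unset Printing Implicit Defensive.

(* A letter (j, isY, inv): generator x_j (isY = false) or y_j (isY = true),
   with exponent -1 iff inv = true. *)
Definition flet := (nat * bool * bool)%type.
Definition fword := seq flet.

Definition finv_let (a : flet) : flet := (a.1.1, a.1.2, ~~ a.2).
Definition finv_word (w : fword) : fword := rev (map finv_let w).

(* free reduction (stack-based); two words are equal in F_{2n} iff their
   free reductions coincide *)
Definition fpush (a : flet) (s : fword) : fword :=
  match s with
  | b :: s' => if b == finv_let a then s' else a :: s
  | [::] => [:: a]
  end.
Definition freduce (w : fword) : fword := foldr fpush [::] w.
Definition feq (u v : fword) : Prop := freduce u = freduce v.

Definition xg (j : nat) : flet := (j, false, false).
Definition yg (j : nat) : flet := (j, true, false).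
Definition yinv (j : nat) : flet := (j, true, true).

Inductive fvb_gen := Sig of nat | Rho of nat.
(* a letter of FVB_n: a generator together with an "inverse" flag *)
Definition vlet := (fvb_gen * bool)%type.
Definition vword := seq vlet.

Definition gen_index (g : fvb_gen) : nat := match g with Sig i => i | Rho i => i end.
Definition valid_gen (n : nat) (g : fvb_gen) : bool :=
  (1 <= gen_index g) && (gen_index g <= n.-1).
Definition valid_vword (n : nat) (w : vword) : bool :=
  all (fun a => valid_gen n a.1) w.

Definition s_ (i : nat) : vlet := (Sig i, false).
Definition r_ (i : nat) : vlet := (Rho i, false).

Inductive fvb_rel (n : nat) : vword -> vword -> Prop :=
  | rel_ss i j : 1 <= i <= n.-1 -> 1 <= j <= n.-1 -> (i + 2 <= j) || (j + 2 <= i) ->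
      fvb_rel n [:: s_ i; s_ j] [:: s_ j; s_ i]
  | rel_rr i j : 1 <= i <= n.-1 -> 1 <= j <= n.-1 -> (i + 2 <= j) || (j + 2 <= i) ->
      fvb_rel n [:: r_ i; r_ j] [:: r_ j; r_ i]
  | rel_sr i j : 1 <= i <= n.-1 -> 1 <= j <= n.-1 -> (i + 2 <= j) || (j + 2 <= i) ->
      fvb_rel n [:: s_ i; r_ j] [:: r_ j; s_ i]
  | rel_sss i : 1 <= i -> i.+1 <= n.-1 ->
      fvb_rel n [:: s_ i; s_ i.+1; s_ i] [:: s_ i.+1; s_ i; s_ i.+1]
  | rel_rrr i : 1 <= i -> i.+1 <= n.-1 ->
      fvb_rel n [:: r_ i; r_ i.+1; r_ i] [:: r_ i.+1; r_ i; r_ i.+1]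
  | rel_rrs i : 1 <= i -> i.+1 <= n.-1 ->
      fvb_rel n [:: r_ i; r_ i.+1; s_ i] [:: s_ i.+1; r_ i; r_ i.+1]
  | rel_r2 i : 1 <= i <= n.-1 -> fvb_rel n [:: r_ i; r_ i] [::]
  | rel_s2 i : 1 <= i <= n.-1 -> fvb_rel n [:: s_ i; s_ i] [::].

Inductive fvb_eq (n : nat) : vword -> vword -> Prop :=
  | fvb_refl w : fvb_eq n w w
  | fvb_sym u v : fvb_eq n u v -> fvb_eq n v u
  | fvb_trans u v w : fvb_eq n u v -> fvb_eq n v w -> fvb_eq n u w
  | fvb_relstep u v l r : fvb_rel n l r -> fvb_eq n (u ++ l ++ v) (u ++ r ++ v)
  | fvb_cancel u v g e : valid_gen n g ->
      fvb_eq n (u ++ [:: (g, e); (g, ~~ e)] ++ v) (u ++ v).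

Definition theta_sig_gen (i : nat) (a : flet) : fword :=
  let: (j, isY, _) := a in
  if ~~ isY && (j == i) then [:: xg i.+1; yg i.+1]
  else if ~~ isY && (j == i.+1) then [:: xg i; yinv i.+1]
  else [:: (j, isY, false)].
Definition swap_idx (i j : nat) : nat :=
  if j == i then i.+1 else if j == i.+1 then i else j.
Definition theta_rho_gen (i : nat) (a : flet) : fword :=
  let: (j, isY, _) := a in [:: (swap_idx i j, isY, false)].

Definition gen_image (g : fvb_gen) : flet -> fword :=
  match g with Sig i => theta_sig_gen i | Rho i => theta_rho_gen i end.

Definition subst (img : flet -> fword) (u : fword) : fword :=
  flatten (map (fun a => if a.2 then finv_word (img a) else img a) u).

(* theta of a letter: theta(g) for a generator; theta(g^{-1}) = theta(g)^{-1},
   which equals theta(g) since theta(sigma_i), theta(rho_i) are involutions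
   of F_{2n} *)
Definition theta_let (a : vlet) : fword -> fword := subst (gen_image a.1).

(* automorphisms compose on the right: (fg)(x) = g(f(x)), so
   theta(a_1 ... a_k)(u) = theta(a_k)( ... theta(a_1)(u) ... ) *)
Definition theta_word (w : vword) (u : fword) : fword :=
  foldl (fun acc a => theta_let a acc) u w.

Definition in_ker_theta (n : nat) (w : vword) : Prop :=
  forall j, 1 <= j <= n ->
    feq (theta_word w [:: xg j]) [:: xg j] /\ feq (theta_word w [:: yg j]) [:: yg j].

(** Follow an ordered pair of strands through a word of FVB_n: record their
    positions and add +1 (resp. -1) whenever a sigma_i crosses them while they
    sit at positions (i, i+1) (resp. (i+1, i)).  Each defining relation of FVB_n
    crosses the same pairs of strands in the same directions on both sides, so
    this signed crossing count is an invariant of group elements.  The word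
    (sigma_1 rho_1 sigma_2 rho_1)^3 acts trivially on F_{2n} under theta, yet its
    crossing count for strands 1, 2 is 2, so it is a nontrivial element of
    ker theta. *)
From mathcomp Require Import all_boot zify.
From Stdlib Require Import ZArith.

Set Implicit Arguments.
Unset Strict Implicit.
Unset Printing Implicit Defensive.

Definition crossing_sign (i a b : nat) : Z :=
  if (a == i) && (b == i.+1) then 1%Z
  else if (a == i.+1) && (b == i) then (-1)%Z else 0%Z.

(* Positions of two strands together with their signed crossing count. *)
Definition strand_pair := (nat * nat * Z)%type.

(* The inverse flag is ignored: every generator of FVB_n is an involution. *)
Definition pair_act_let (x : vlet) (p : strand_pair) : strand_pair :=
  let: (a, b, z) := p in
  match x.1 with
  | Sig i => (swap_idx i a, swap_idx i b, (z + crossing_sign i a b)%Z)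
  | Rho i => (swap_idx i a, swap_idx i b, z)
  end.

Definition pair_act (w : vword) (p : strand_pair) : strand_pair :=
  foldl (fun p x => pair_act_let x p) p w.

Lemma pair_act_cat (u v : vword) (p : strand_pair) :
  pair_act (u ++ v) p = pair_act v (pair_act u p).
Proof. by rewrite /pair_act foldl_cat. Qed.

Ltac no_if t := lazymatch t with context [if _ then _ else _] => fail | _ => idtac end.

(* Innermost comparisons are split first, so nested [swap_idx]s reduce before
   being compared themselves. *)
Ltac case_innermost_eq :=
  match goal with |- context [?x == ?y] =>
    no_if x; no_if y;
    let E := fresh "E" in
    case E: (x == y); move/eqP: E => E; rewrite /=; try subst; try (exfalso; lia)
  end.

Ltac solve_pair_act :=
  rewrite /pair_act /= /swap_idx /crossing_sign /=;
  repeat case_innermost_eq; try congr (_, _, _); lia.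

Lemma pair_act_rel (n : nat) (l r : vword) :
  fvb_rel n l r -> pair_act l =1 pair_act r.
Proof.
case=> [i j _ _ far|i j _ _ far|i j _ _ far|i _ _|i _ _|i _ _|i _|i _] [[a b] z];
  solve_pair_act.
Qed.

Lemma pair_act_involutive (g : fvb_gen) (e e' : bool) :
  pair_act [:: (g, e); (g, e')] =1 id.
Proof. by case: g => i [[a b] z]; solve_pair_act. Qed.

Lemma pair_act_fvb_eq (n : nat) (u v : vword) :
  fvb_eq n u v -> pair_act u =1 pair_act v.
Proof.
elim=> {u v} [//|u v _ IH p|u v w _ IHuv _ IHvw p|u v l r lr p|u v g e _ p].
- by rewrite IH.
- by rewrite IHuv IHvw.
- by rewrite !pair_act_cat (pair_act_rel lr).
- by rewrite !pair_act_cat [pair_act [:: _; _] _]pair_act_involutive.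
Qed.

Definition kernel_word : vword := flatten (nseq 3 [:: s_ 1; r_ 1; s_ 2; r_ 1]).

Lemma kernel_word_valid (n : nat) : 3 <= n -> valid_vword n kernel_word.
Proof. by move=> n_ge3; rewrite /valid_vword /valid_gen /=; lia. Qed.

Lemma kernel_word_in_ker (n : nat) : in_ker_theta n kernel_word.
Proof.
(* For j >= 4 the letters x_j, y_j are fixed by theta(sigma_i) and theta(rho_i),
   i <= 2, and the computation goes through for symbolic j. *)
by move=> [|[|[|[|j]]]] _; split.
Qed.

Lemma kernel_word_crossings : pair_act kernel_word (1, 2, 0%Z) = (1, 2, 2%Z).
Proof. by []. Qed.

Lemma kernel_word_neq1 (n : nat) : ~ fvb_eq n kernel_word [::].
Proof. by move=> /pair_act_fvb_eq /(_ (1, 2, 0%Z)); rewrite kernel_word_crossings. Qed.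

Theorem proposition8 (n : nat) : 3 <= n ->
  exists w : vword, valid_vword n w /\ in_ker_theta n w /\ ~ fvb_eq n w [::].
Proof.
move=> n_ge3; exists kernel_word; split; first exact: kernel_word_valid.
by split; [exact: kernel_word_in_ker | exact: kernel_word_neq1].
Qed.
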